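(* Let $V$ and $W$ be subsets of normed spaces over $\mathbb{R}$ or $\mathbb{C}$ and $T:V\to W$. Assume that for every $w\in T(V)$ the set $\arg\min\{\|v\|:v\in V,\ T(v)=w\}$ is a singleton. Let $W'=\{w\in W:\arg\min\{\|w_0-w\|:w_0\in T(V)\}\text{ is a singleton}\}$. Then there exists a pseudo-inverse $S:W'\to V$ of $T$, and it is unique.
   Context: Let $V,W$ be subsets of normed spaces over $\mathbb{R}$ or $\mathbb{C}$ and $T:V\to W$. For a set $E\subseteq W$ with either $E\subseteq T(V)$ or $T(V)\subseteq E$, an operator $S:E\to V$ is a pseudo-inverse of $T$ (on $E$) if: (BAS) for every $w\in E$, the minimum $m_w=\min_{v\in V}\|T(v)-w\|$ is attained, the norm attains its minimum on $\{v\in V:\|T(v)-w\|=m_w\}$, and $S(w)\in\arg\min\{\|v\|:v\in V,\ \|T(v)-w\|=m_w\}$; and (MP2) $S(T(S(w)))=S(w)$ for every $w\in E$. *)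

From HB Require Import structures.
From mathcomp Require Import all_boot all_order all_algebra.
From mathcomp Require Import all_classical all_reals all_analysis.
Set Implicit Arguments. Unset Strict Implicit. Unset Printing Implicit Defensive.
Import Order.TTheory GRing.Theory Num.Theory.
Local Open Scope classical_set_scope.
Local Open Scope ring_scope.

Definition argmin_set (K : numDomainType) (U : Type) (A : set U) (f : U -> K) : set U :=
  [set x | A x /\ forall y, A y -> f x <= f y].

Definition is_singleton (U : Type) (A : set U) : Prop := exists x, A = [set x].

Definition min_value (K : numDomainType) (U : Type) (A : set U) (f : U -> K) (m : K) : Prop :=
  (exists2 x, A x & f x = m) /\ (forall y, A y -> m <= f y).

(* S (defined on the ambient space, relevant on E) is a pseudo-inverse of
   T : V -> W on E, where V, W are subsets of normed spaces X, Y over K. *)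
Definition pseudo_inverse (K : numFieldType) (X Y : normedModType K)
    (V : set X) (T : X -> Y) (E : set Y) (S : Y -> X) : Prop :=
  (E `<=` T @` V \/ T @` V `<=` E) /\
  (forall w, E w ->
     exists m : K,
       min_value V (fun v => `|T v - w|) m /\
       (argmin_set [set v | V v /\ `|T v - w| = m] (fun v => `|v|) !=set0) /\
       argmin_set [set v | V v /\ `|T v - w| = m] (fun v => `|v|) (S w)) /\
  (* (MP2), including that S (T (S w)) is defined, i.e. T (S w) lies in E *)
  (forall w, E w -> E (T (S w)) /\ S (T (S w)) = S w).

From HB Require Import structures.
From mathcomp Require Import all_boot all_order all_algebra.
From mathcomp Require Import all_classical all_reals all_analysis.
Set Implicit Arguments. Unset Strict Implicit. Unset Printing Implicit Defensive.
Import Order.TTheory GRing.Theory Num.Theory.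
Local Open Scope classical_set_scope.
Local Open Scope ring_scope.

(* When [w] has a unique best approximation [a] in [T(V)], the least-squares
   solutions of [T v = w] are exactly the solutions of [T v = a], so the
   (BAS) condition at [w] singles out the unique minimal-norm element of the
   fiber over [a]; this determines [S w].  Since [T (S w) = a] and [a] is its
   own best approximation, the same element is selected at [a], which is
   (MP2). *)

Section ArgminSingleton.
Variables (K : numDomainType) (U : Type) (A : set U) (f : U -> K) (a : U).
Hypothesis argminA : argmin_set A f = [set a].

Lemma argmin_singleton_mem : A a /\ forall y, A y -> f a <= f y.
Proof. by have : argmin_set A f a by rewrite argminA. Qed.

Lemma argmin_singleton_eq x : A x -> (forall y, A y -> f x <= f y) -> x = a.
Proof. by move=> Ax minx; have : argmin_set A f x by []; rewrite argminA. Qed.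

End ArgminSingleton.

Section LeastSquaresMinimalNorm.
Variables (K : numFieldType) (X Y : normedModType K) (V : set X) (T : X -> Y).

Definition best_approx (w : Y) : set Y := argmin_set (T @` V) (fun w0 => `|w0 - w|).

Definition lsq_min_norm (w : Y) : set X := [set v | exists m : K,
  min_value V (fun v => `|T v - w|) m /\
  argmin_set [set v | V v /\ `|T v - w| = m] (fun v => `|v|) v].

Lemma best_approx_self w : (T @` V) w -> best_approx w = [set w].
Proof.
move=> TVw; apply/seteqP; split => [y [_ /(_ w TVw)]|y ->] /=.
  by rewrite subrr normr0 normr_le0 subr_eq0 => /eqP.
by split => // z _; rewrite subrr normr0.
Qed.

Section UniqueBestApprox.
Variables (w a : Y).
Hypothesis best_approx_w : best_approx w = [set a].

Lemma best_approx_image : (T @` V) a.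
Proof. by case: (argmin_singleton_mem best_approx_w). Qed.

Lemma best_approx_min_value : min_value V (fun v => `|T v - w|) `|a - w|.
Proof.
have [[x Vx Txa] mina] := argmin_singleton_mem best_approx_w.
by split=> [|y Vy]; [exists x; rewrite ?Txa | apply: mina; exists y].
Qed.

Lemma lsq_set_fiber m : min_value V (fun v => `|T v - w|) m ->
  [set v | V v /\ `|T v - w| = m] = [set v | V v /\ T v = a].
Proof.
move=> [[x0 Vx0 ex0] minm].
have Tfib u : V u -> `|T u - w| = m -> T u = a.
  move=> Vu eu; apply: (argmin_singleton_eq best_approx_w); first by exists u.
  by move=> _ [y Vy <-]; rewrite eu minm.
apply/seteqP; split=> v [Vv ev]; split=> //; first exact: Tfib.
by rewrite ev -(Tfib x0) // ex0.
Qed.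

Lemma lsq_min_normE :
  lsq_min_norm w = argmin_set [set v | V v /\ T v = a] (fun v => `|v|).
Proof.
apply/seteqP; split=> [v [m [minm]]|v minv]; first by rewrite lsq_set_fiber.
have min_aw := best_approx_min_value.
by exists `|a - w|; rewrite lsq_set_fiber.
Qed.

Lemma lsq_min_norm_fiber v : lsq_min_norm w v -> T v = a.
Proof. by rewrite lsq_min_normE => -[[]]. Qed.

End UniqueBestApprox.

Lemma lsq_min_norm_image w a v : best_approx w = [set a] ->
  lsq_min_norm w v -> lsq_min_norm (T v) = lsq_min_norm w.
Proof.
move=> best_a lsqv; rewrite (lsq_min_norm_fiber best_a lsqv) (lsq_min_normE best_a).
exact/lsq_min_normE/best_approx_self/(best_approx_image best_a).
Qed.

Lemma pseudo_inverse_lsq_min_norm E S w :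
  pseudo_inverse V T E S -> E w -> lsq_min_norm w (S w).
Proof. by move=> [_ [bas _]] /bas [m [minm [_ argminS]]]; exists m. Qed.

End LeastSquaresMinimalNorm.

Theorem mainTheorem6 (K : numFieldType) (X Y : normedModType K)
    (V : set X) (W : set Y) (T : X -> Y)
    (hT : forall v, V v -> W (T v))
    (huniq : forall w, (T @` V) w ->
       is_singleton (argmin_set [set v | V v /\ T v = w] (fun v => `|v|))) :
  let W' := [set w | W w /\
               is_singleton (argmin_set (T @` V) (fun w0 => `|w0 - w|))] in
  (exists S : Y -> X, pseudo_inverse V T W' S) /\
  (forall S1 S2 : Y -> X, pseudo_inverse V T W' S1 -> pseudo_inverse V T W' S2 ->
     forall w, W' w -> S1 w = S2 w).
Proof.
move=> W'.
have image_sub : T @` V `<=` W'.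
  move=> _ [v Vv <-]; split; first exact: hT.
  by exists (T v); apply/best_approx_self; exists v.
have lsq_singleton w : W' w -> is_singleton (lsq_min_norm V T w).
  move=> [_ [a best_a]]; rewrite (lsq_min_normE best_a).
  exact/huniq/(best_approx_image best_a).
split=> [|S1 S2 pinv1 pinv2 w W'w]; last first.
  have [s lsq_s] := lsq_singleton w W'w.
  have Sw_eq S : pseudo_inverse V T W' S -> S w = s.
    by move=> /pseudo_inverse_lsq_min_norm /(_ W'w); rewrite lsq_s.
  by rewrite (Sw_eq S1) // (Sw_eq S2).
pose S w := get (lsq_min_norm V T w).
have lsqS w : W' w -> lsq_min_norm V T w (S w).
  move=> /lsq_singleton [s lsq_s].
  by apply: (getPex (P := lsq_min_norm V T w)); exists s; rewrite lsq_s.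
exists S; split; [by right; exact: image_sub | split=> w W'w].
  have [m [minm argminS]] := lsqS w W'w.
  by exists m; split=> //; split=> //; exists (S w).
have [_ [a best_a]] := W'w.
split; last by rewrite /S (lsq_min_norm_image best_a (lsqS w W'w)).
apply: image_sub; rewrite (lsq_min_norm_fiber best_a (lsqS w W'w)).
exact: best_approx_image best_a.
Qed.
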